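(* If a formula $\varphi$ is satisfiable in a Bochvar-Kripke model, then it is satisfiable in a Bochvar-Kripke model $(W,R,v)$ with $W$ finite.
   Context: Formulas are built from a countably infinite set of propositional variables and the constants $0,1$ using the unary connectives $\neg$, $J_2$, $\Box$ and the binary connective $\vee$. Let $\mathbf{WK}^e$ be the algebra on $\{0,\tfrac12,1\}$ with $\neg0=1$, $\neg1=0$, $\neg\tfrac12=\tfrac12$; $a\vee b=\tfrac12$ if $a=\tfrac12$ or $b=\tfrac12$, otherwise $a\vee b=\max(a,b)$; $J_2(1)=1$, $J_2(\tfrac12)=J_2(0)=0$. A Bochvar-Kripke model is a triple $(W,R,v)$ with $W\neq\emptyset$, $R\subseteq W\times W$, $v:W\times\mathrm{Fm}\to\{0,\tfrac12,1\}$ such that for each $w$, $v(w,\cdot)$ commutes with $\neg,\vee,J_2,0,1$ as computed in $\mathbf{WK}^e$, and: $v(w,\Box\varphi)=\tfrac12$ iff $v(w,\varphi)=\tfrac12$; $v(w,\Box\varphi)=1$ iff $v(w,\varphi)\neq\tfrac12$ and $v(s,\varphi)=1$ for all $s$ with $wRs$; $v(w,\Box\varphi)=0$ iff $v(w,\varphi)\neq\tfrac12$ and $v(s,\varphi)\neq1$ for some $s$ with $wRs$. A formula $\varphi$ is satisfiable in a model $(W,R,v)$ if $v(w,\varphi)=1$ for some $w\in W$. *)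

From Stdlib Require Import List.

Inductive form : Type :=
| Var : nat -> form
| Bot : form
| Top : form
| Neg : form -> form
| J2  : form -> form
| Box : form -> form
| Vee : form -> form -> form.

Inductive tv : Type := T0 | Thalf | T1.

Definition wk_neg (a : tv) : tv :=
  match a with T0 => T1 | Thalf => Thalf | T1 => T0 end.

Definition wk_vee (a b : tv) : tv :=
  match a, b with
  | Thalf, _ => Thalf
  | _, Thalf => Thalf
  | T1, _ => T1
  | _, T1 => T1
  | T0, T0 => T0
  end.

Definition wk_J2 (a : tv) : tv :=
  match a with T1 => T1 | _ => T0 end.

Record BKmodel (W : Type) (R : W -> W -> Prop) (v : W -> form -> tv) : Prop := {
  bk_nonempty : inhabited W;
  bk_bot  : forall w, v w Bot = T0;
  bk_top  : forall w, v w Top = T1;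
  bk_neg  : forall w f, v w (Neg f) = wk_neg (v w f);
  bk_vee  : forall w f g, v w (Vee f g) = wk_vee (v w f) (v w g);
  bk_J2   : forall w f, v w (J2 f) = wk_J2 (v w f);
  bk_box_half : forall w f, v w (Box f) = Thalf <-> v w f = Thalf;
  bk_box_one  : forall w f, v w (Box f) = T1 <->
                  (v w f <> Thalf /\ forall s, R w s -> v s f = T1);
  bk_box_zero : forall w f, v w (Box f) = T0 <->
                  (v w f <> Thalf /\ exists s, R w s /\ v s f <> T1)
}.

Definition satisfiable_in (W : Type) (v : W -> form -> tv) (phi : form) : Prop :=
  exists w : W, v w phi = T1.

Definition finite_type (W : Type) : Prop :=
  exists l : list W, forall w : W, In w l.

From Stdlib Require Import List Classical ClassicalEpsilon ProofIrrelevance.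
Import ListNotations.

(** Filtration through the subformulas of [phi]: identify two worlds when
    they give the same value to every subformula, so at most [3^n] classes
    remain.  Relate two classes when some members are related, interpret the
    atoms at a chosen representative, and recompute every formula by the
    Bochvar-Kripke clauses; the result is again a model.  In the box case, [Box g] is itself a
    subformula, so all members of a class agree on it, which transfers the
    condition "every successor satisfies [g]" from one member to the whole
    class. *)

Definition box_tv (a : tv) (P : Prop) : tv :=
  match a with
  | Thalf => Thalf
  | _ => if excluded_middle_informative P then T1 else T0
  end.

Lemma box_tv_half a P : box_tv a P = Thalf <-> a = Thalf.
Proof.
  destruct a; simpl; try destruct (excluded_middle_informative P);
    split; intro; congruence.
Qed.

Lemma box_tv_one a P : box_tv a P = T1 <-> a <> Thalf /\ P.
Proof.
  destruct a; simpl; try destruct (excluded_middle_informative P);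
    intuition congruence.
Qed.

Lemma box_tv_zero a P : box_tv a P = T0 <-> a <> Thalf /\ ~ P.
Proof.
  destruct a; simpl; try destruct (excluded_middle_informative P);
    intuition congruence.
Qed.

Lemma box_tv_ext a P Q : (a <> Thalf -> (P <-> Q)) -> box_tv a P = box_tv a Q.
Proof.
  destruct a; simpl; intros HPQ; try reflexivity;
    specialize (HPQ ltac:(discriminate));
    destruct (excluded_middle_informative P), (excluded_middle_informative Q);
    tauto.
Qed.

Lemma not_all_succ_iff {W : Type} (R : W -> W -> Prop) (P : W -> Prop) w :
  (~ forall s, R w s -> P s) <-> exists s, R w s /\ ~ P s.
Proof.
  split.
  - intros H. apply not_all_ex_not in H as [s Hs]. exists s. now apply imply_to_and.
  - intros [s [Hs HP]] H. exact (HP (H s Hs)).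
Qed.

Lemma bk_box_tv {W : Type} (R : W -> W -> Prop) (v : W -> form -> tv) w f :
  BKmodel W R v ->
  v w (Box f) = box_tv (v w f) (forall s, R w s -> v s f = T1).
Proof.
  intros M. symmetry. destruct (v w (Box f)) eqn:E.
  - apply box_tv_zero. rewrite not_all_succ_iff. now apply (bk_box_zero _ _ _ M).
  - apply box_tv_half. now apply (bk_box_half _ _ _ M).
  - apply box_tv_one. now apply (bk_box_one _ _ _ M).
Qed.

Fixpoint kripke_eval {W : Type} (R : W -> W -> Prop) (val : W -> nat -> tv)
    (f : form) (w : W) : tv :=
  match f with
  | Var p => val w p
  | Bot => T0
  | Top => T1
  | Neg g => wk_neg (kripke_eval R val g w)
  | J2 g => wk_J2 (kripke_eval R val g w)
  | Box g => box_tv (kripke_eval R val g w)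
               (forall s, R w s -> kripke_eval R val g s = T1)
  | Vee g h => wk_vee (kripke_eval R val g w) (kripke_eval R val h w)
  end.

Lemma kripke_eval_BKmodel (W : Type) (R : W -> W -> Prop) (val : W -> nat -> tv) :
  inhabited W -> BKmodel W R (fun w f => kripke_eval R val f w).
Proof.
  intros HW; constructor; simpl; auto; intros w f.
  - apply box_tv_half.
  - apply box_tv_one.
  - now rewrite box_tv_zero, not_all_succ_iff.
Qed.

Fixpoint sub (f : form) : list form :=
  f :: match f with
       | Neg g | J2 g | Box g => sub g
       | Vee g h => sub g ++ sub h
       | _ => []
       end.

Fixpoint tv_lists (n : nat) : list (list tv) :=
  match n with
  | 0 => [[]]
  | S n => flat_map (fun l => [T0 :: l; Thalf :: l; T1 :: l]) (tv_lists n)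
  end.

Lemma In_tv_lists l : In l (tv_lists (length l)).
Proof.
  induction l as [|a l IH]; simpl; auto.
  apply in_flat_map. exists l. split; auto. destruct a; simpl; auto.
Qed.

Lemma finite_sig {A : Type} (P : A -> Prop) (l : list A) :
  (forall a, P a -> In a l) -> finite_type {a | P a}.
Proof.
  intros Hl.
  exists (flat_map (fun a => match excluded_middle_informative (P a) with
                             | left p => [exist P a p]
                             | right _ => []
                             end) l).
  intros [a p]. apply in_flat_map. exists a. split; [now apply Hl|].
  destruct (excluded_middle_informative (P a)) as [p'|]; [|contradiction].
  rewrite (proof_irrelevance _ p p'). now left.
Qed.

Section Filtration.

Context {W : Type} (R : W -> W -> Prop) (v : W -> form -> tv) (Sigma : list form).

Definition S_type (w : W) : list tv := map (v w) Sigma.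

Definition filt_world : Type := {l : list tv | exists w, l = S_type w}.

Definition filt_class (w : W) : filt_world :=
  exist _ (S_type w) (ex_intro _ w eq_refl).

Definition filt_rep (x : filt_world) : W :=
  proj1_sig (constructive_indefinite_description _ (proj2_sig x)).

Lemma filt_rep_spec x : proj1_sig x = S_type (filt_rep x).
Proof.
  unfold filt_rep. now destruct (constructive_indefinite_description _ _).
Qed.

Definition filt_rel (x y : filt_world) : Prop :=
  exists w u, R w u /\ proj1_sig x = S_type w /\ proj1_sig y = S_type u.

Definition filt_val (x : filt_world) (p : nat) : tv := v (filt_rep x) (Var p).

Lemma S_type_eq_in w w' f : S_type w = S_type w' -> In f Sigma -> v w f = v w' f.
Proof. intros E. now apply map_ext_in_iff. Qed.

Lemma filt_world_finite : finite_type filt_world.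
Proof.
  apply (finite_sig _ (tv_lists (length Sigma))).
  intros l [w ->]. rewrite <- (length_map (v w) Sigma). apply In_tv_lists.
Qed.

Hypothesis model : BKmodel W R v.

Lemma filt_truth f : incl (sub f) Sigma ->
  forall x w, proj1_sig x = S_type w -> kripke_eval filt_rel filt_val f x = v w f.
Proof.
  induction f as [p| | |f IH|f IH|f IH|f IHf g IHg];
    intros Hsub x w Hx; simpl;
    apply incl_cons_inv in Hsub as [Hf Hsub].
  - apply S_type_eq_in; [now rewrite <- filt_rep_spec | exact Hf].
  - now rewrite (bk_bot _ _ _ model).
  - now rewrite (bk_top _ _ _ model).
  - now rewrite (bk_neg _ _ _ model), (IH Hsub x w Hx).
  - now rewrite (bk_J2 _ _ _ model), (IH Hsub x w Hx).
  - rewrite (bk_box_tv _ _ _ _ model), (IH Hsub x w Hx).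
    apply box_tv_ext; intros Hhalf; split.
    + intros Hall s Hs. rewrite <- (IH Hsub (filt_class s) s eq_refl).
      apply Hall. now exists w, s.
    + intros Hall y [w' [u [Hw'u [Hw' Hu]]]]. rewrite (IH Hsub y u Hu).
      assert (Hbox : v w (Box f) = T1) by now apply (bk_box_one _ _ _ model).
      assert (Hbox' : v w' (Box f) = T1).
      { rewrite <- Hbox. apply S_type_eq_in; [congruence | exact Hf]. }
      now apply (bk_box_one _ _ _ model) in Hbox' as [_ Hsucc]; apply Hsucc.
  - apply incl_app_inv in Hsub as [Hg Hh].
    now rewrite (bk_vee _ _ _ model), (IHf Hg x w Hx), (IHg Hh x w Hx).
Qed.

End Filtration.

Theorem mainTheorem6 (phi : form) :
  (exists (W : Type) (R : W -> W -> Prop) (v : W -> form -> tv),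
      BKmodel W R v /\ satisfiable_in W v phi) ->
  exists (W : Type) (R : W -> W -> Prop) (v : W -> form -> tv),
      BKmodel W R v /\ finite_type W /\ satisfiable_in W v phi.
Proof.
  intros [W [R [v [model [w0 Hw0]]]]].
  set (Sigma := sub phi).
  exists (filt_world v Sigma), (filt_rel R v Sigma),
    (fun x f => kripke_eval (filt_rel R v Sigma) (filt_val v Sigma) f x).
  split; [apply kripke_eval_BKmodel; exact (inhabits (filt_class v Sigma w0))|].
  split; [apply filt_world_finite|].
  exists (filt_class v Sigma w0).
  now rewrite (filt_truth R v Sigma model phi (incl_refl _) (filt_class v Sigma w0) w0 eq_refl).
Qed.
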